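(* Let $M$ be a finite item set, $n\ge1$, and $v$ a normalized monotone valuation on $M$. (1) If $v$ is subadditive, then $\mathrm{RMMS}(M,v,n)\ge \frac1n\,\mathrm{MMS}(M,v,n)$. (2) If $v$ is additive, then $\mathrm{RMMS}(M,v,n)\ge \rho_n\,\mathrm{MMS}(M,v,n)$, where $\rho_n=\frac{2n}{3n-1}$ for odd $n$ and $\rho_n=\frac{2n-2}{3n-4}$ for even $n$; in particular $\mathrm{RMMS}(M,v,n)\ge\frac23\,\mathrm{MMS}(M,v,n)$.
   Context: A valuation is a function $v:2^M\to\mathbb{R}_{\ge0}$ that is normalized ($v(\emptyset)=0$) and monotone. It is additive if $v(S)=\sum_{e\in S}v(\{e\})$ for all $S$, and subadditive if $v(S)+v(T)\ge v(S\cup T)$ for all $S,T\subseteq M$. $\mathrm{MMS}(M,v,n)$ is the maximum, over all partitions $P_1,\dots,P_n$ of $M$ into $n$ (possibly empty) parts, of $\min_j v(P_j)$. Residual maximin share: $\mathrm{RMMS}(M,v,n)$ is the largest real $t$ with the following property: for every $0\le k<n$ and every $k$ pairwise disjoint bundles $B_1,\dots,B_k\subseteq M$ with $v(B_j)<t$ for all $j$, the set $M\setminus(B_1\cup\dots\cup B_k)$ can be partitioned into $n-k$ bundles each of value (under $v$) at least $t$. *)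

From HB Require Import structures.
From mathcomp Require Import all_boot all_order all_algebra.
From mathcomp Require Import classical_sets boolp reals.
Set Implicit Arguments. Unset Strict Implicit. Unset Printing Implicit Defensive.
Import Order.TTheory GRing.Theory Num.Theory.
Local Open Scope ring_scope.

Section Defs.
Context {R : realType} {T : finType}.

Definition valuation (v : {set T} -> R) : Prop :=
  [/\ forall S, 0 <= v S, v finset.set0 = 0 &
      forall S U : {set T}, S \subset U -> v S <= v U].

Definition additive_valuation (v : {set T} -> R) : Prop :=
  forall S : {set T}, v S = \sum_(e in S) v [set e].

Definition subadditive_valuation (v : {set T} -> R) : Prop :=
  forall S U : {set T}, v (S :|: U) <= v S + v U.

(* A partition of M into n possibly empty (ordered) parts is given by an
   assignment f : T -> 'I_n; part j is [set x | f x == j]. *)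
Definition part n (f : {ffun T -> 'I_n}) (j : 'I_n) : {set T} :=
  [set x | f x == j].

Definition partition_min (v : {set T} -> R) n (f : {ffun T -> 'I_n}) : R :=
  inf [set v (part f j) | j in [set: 'I_n]]%classic.

Definition MMS (v : {set T} -> R) (n : nat) : R :=
  sup [set partition_min v f | f in [set: {ffun T -> 'I_n}]]%classic.

Definition rmms_prop (v : {set T} -> R) (n : nat) (t : R) : Prop :=
  forall (k : nat), (k < n)%N ->
  forall B : 'I_k -> {set T},
    (forall i j : 'I_k, i != j -> [disjoint B i & B j]) ->
    (forall j, v (B j) < t) ->
    exists g : {ffun T -> 'I_(n - k)},
      forall j : 'I_(n - k),
        t <= v ([set x in ~: \bigcup_(i < k) B i] :&: part g j).

Definition RMMS (v : {set T} -> R) (n : nat) : R :=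
  sup [set t | rmms_prop v n t]%classic.

Definition rho (n : nat) : R :=
  if odd n then (2 * n)%:R / (3 * n - 1)%:R
  else (2 * n - 2)%:R / (3 * n - 4)%:R.

End Defs.

(* Fix an MMS partition P_1, ..., P_n, every part worth at least mu = MMS, and let W
   be the union of the k removed bundles, each worth less than t.
   Subadditive case, t = mu / n: v (P_j \ W) >= mu - v W >= mu - k mu / n >= mu / n, so
   any n - k of the sets P_j \ W will do.
   Additive case, t = rho_n mu: the pieces P_j \ W have total deficit
   sum_j max (0, mu - v (P_j \ W)) <= v W <= k t.  Greedily, a piece worth t becomes a
   bundle on its own, and two small pieces whose union is worth at most 2 mu - t are
   merged, which lowers the deficit by at least t.  Otherwise all pairwise unions
   exceed 2 mu - t >= t; every piece then has deficit above mu - t, and the deficit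
   budget leaves enough pieces to pair them up as soon as (m - g) t <= m (mu - t)
   whenever m < 2 g and m <= n.  This inequality is what determines rho_n. *)

From HB Require Import structures.
From mathcomp Require Import all_boot all_order all_algebra.
From mathcomp Require Import classical_sets boolp reals.
(* Re-imported after classical_sets so that set0, setUA, subsetT, ... denote finset notions. *)
From mathcomp Require Import fintype finset.
From mathcomp Require Import zify ring lra.
Import Order.TTheory GRing.Theory Num.Theory.
Set Implicit Arguments. Unset Strict Implicit. Unset Printing Implicit Defensive.
Local Open Scope ring_scope.

Lemma set_in_id (T : finType) (A : {set T}) : [set x in A] = A.
Proof. by apply/setP => x; rewrite inE. Qed.

Definition pieces_disjoint (I T : finType) (S : {set I}) (Q : I -> {set T}) : Prop :=
  {in S &, forall i j, i != j -> [disjoint Q i & Q j]}.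

Lemma pieces_disjoint_sub (I T : finType) (S S' : {set I}) (Q : I -> {set T}) :
  S' \subset S -> pieces_disjoint S Q -> pieces_disjoint S' Q.
Proof. by move=> /subsetP sS'S Qdis i j /sS'S iS /sS'S; apply: Qdis. Qed.

Lemma pieces_disjoint_bigcup (I T : finType) (S S' : {set I}) (Q : I -> {set T}) i :
  pieces_disjoint S Q -> S' \subset S :\ i -> i \in S ->
  [disjoint Q i & \bigcup_(j in S') Q j].
Proof.
move=> Qdis /subsetP sS' iS; apply: bigcup_disjoint => j /sS'.
by rewrite !inE => /andP[ji jS]; apply: Qdis; rewrite // eq_sym.
Qed.

Lemma pieces_disjoint_merge (I T : finType) (S : {set I}) (Q : I -> {set T}) a b :
  pieces_disjoint S Q -> a \in S -> b \in S -> a != b ->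
  pieces_disjoint (S :\ b) (fun i => if i == a then Q a :|: Q b else Q i).
Proof.
move=> Qdis aS bS ab i j; rewrite !inE => /andP[ib iS] /andP[jb jS].
have Qab_dis k : k \in S -> k != a -> k != b -> [disjoint Q a :|: Q b & Q k].
  move=> kS ka kb; rewrite disjoints_subset subUset -!disjoints_subset.
  by rewrite !Qdis // eq_sym.
case: ifP => [/eqP-> | /negbT ia]; case: ifP => [/eqP-> | /negbT ja] ij.
- by rewrite eqxx in ij.
- by rewrite Qab_dis.
- by rewrite disjoint_sym Qab_dis.
- exact: Qdis.
Qed.

Lemma pieces_disjoint_part (T : finType) n (f : {ffun T -> 'I_n}) (A : {set T}) :
  pieces_disjoint [set: 'I_n] (fun j => A :&: part f j).
Proof.
move=> i j _ _ ij; rewrite -setI_eq0; apply/eqP/setP => x.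
rewrite !inE; apply/negP => /and3P[/andP[_ /eqP fi] _ /eqP fj].
by rewrite -fi -fj eqxx in ij.
Qed.

Section Valuation.
Context {R : realType} {T : finType} (v : {set T} -> R) (vP : valuation v).

Lemma valuation_ge0 (S : {set T}) : 0 <= v S.
Proof. by case: vP. Qed.

Lemma valuation0 : v set0 = 0.
Proof. by case: vP. Qed.

Lemma valuation_le (S U : {set T}) : S \subset U -> v S <= v U.
Proof. by case: vP => _ _; apply. Qed.

Lemma partition_min_le n (f : {ffun T -> 'I_n}) j : partition_min v f <= v (part f j).
Proof.
apply: ge_inf; last by exists j.
by exists 0 => _ [i _ <-]; apply: valuation_ge0.
Qed.

Lemma partition_min_ge0 n (f : {ffun T -> 'I_n}) : (0 < n)%N -> 0 <= partition_min v f.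
Proof.
move=> n_gt0; apply: lb_le_inf; first by exists (v (part f (Ordinal n_gt0))), (Ordinal n_gt0).
by move=> _ [i _ <-]; apply: valuation_ge0.
Qed.

(* Over the finite type of partitions the supremum defining MMS is a maximum. *)
Lemma MMS_partition n : (0 < n)%N ->
  0 <= MMS v n /\ exists f : {ffun T -> 'I_n}, forall j, MMS v n <= v (part f j).
Proof.
move=> n_gt0; pose f1 : {ffun T -> 'I_n} := [ffun=> Ordinal n_gt0].
pose f0 := Order.arg_max f1 xpredT (@partition_min R T v n).
have f0_ub : ubound [set partition_min v f | f in [set: {ffun T -> 'I_n}]]%classic
                    (partition_min v f0).
  by move=> _ [f _ <-]; rewrite /f0; case: arg_maxP => //= g _; apply.
have MMS_le : MMS v n <= partition_min v f0.
  by apply: ge_sup => //; exists (partition_min v f1), f1.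
split.
  apply: le_trans (partition_min_ge0 f0 n_gt0) _.
  by apply: (ub_le_sup (ex_intro _ _ f0_ub)); exists f0.
by exists f0 => j; apply: le_trans MMS_le (partition_min_le f0 j).
Qed.

Lemma rmms_prop_le_RMMS n t : (0 < n)%N -> rmms_prop v n t -> t <= RMMS v n.
Proof.
move=> n_gt0 rmms_t; apply: ub_le_sup rmms_t; exists (v [set: T]) => t' rmms_t'.
have [i|i|g g_ge] := rmms_t' 0%N n_gt0 (fun=> set0); [by case: i | by case: i |].
have n_gt0' : (0 < n - 0)%N by rewrite subn0.
by apply: le_trans (g_ge (Ordinal n_gt0')) _; apply/valuation_le/subsetT.
Qed.

Lemma subadditive_bigcup (I : finType) (F : I -> {set T}) :
  subadditive_valuation v -> v (\bigcup_i F i) <= \sum_i v (F i).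
Proof.
move=> vsub; apply: (big_ind2 (fun A r => v A <= r)) => //; first by rewrite valuation0.
by move=> A1 r1 A2 r2 le1 le2; apply: le_trans (vsub _ _) (lerD le1 le2).
Qed.

(* The bundles are the classes 0, ..., g - 1 of the labelling [h]; points with other
   labels are left over. *)
Definition splits_into (t : R) (U : {set T}) (g : nat) : Prop :=
  exists h : T -> nat, forall j, (j < g)%N -> t <= v (U :&: [set x | h x == j]).

Lemma splits_into0 t (U : {set T}) : splits_into t U 0.
Proof. by exists (fun=> 0%N). Qed.

Lemma splits_into_le0 t (U : {set T}) g : t <= 0 -> splits_into t U g.
Proof. by move=> t_le0; exists (fun=> 0%N) => j _; apply: le_trans t_le0 (valuation_ge0 _). Qed.

Lemma splits_intoS t (U U' : {set T}) g : U \subset U' -> splits_into t U g -> splits_into t U' g.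
Proof. by move=> sUU' [h h_ge]; exists h => j /h_ge /le_trans; apply; apply/valuation_le/setSI. Qed.

Lemma splits_into_cons t (A U : {set T}) g : [disjoint A & U] -> t <= v A ->
  splits_into t U g -> splits_into t (A :|: U) g.+1.
Proof.
move=> dAU tA [h h_ge]; exists (fun x => if x \in A then 0%N else (h x).+1) => -[|j] lt_j.
  by apply: le_trans tA _; apply/valuation_le/subsetP => x xA; rewrite !inE xA.
apply: le_trans (h_ge j lt_j) _; apply/valuation_le/subsetP => x.
by rewrite !inE => /andP[xU /eqP <-]; rewrite xU orbT (disjointFl dAU xU) /=.
Qed.

Lemma splits_into_partition t (U : {set T}) p : (0 < p)%N -> splits_into t U p ->
  exists f : {ffun T -> 'I_p}, forall j, t <= v (U :&: part f j).
Proof.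
move=> p_gt0 [h h_ge]; have lt_p x : (minn (h x) p.-1 < p)%N by lia.
exists [ffun x => Ordinal (lt_p x)] => j.
apply: le_trans (h_ge j (ltn_ord j)) _; apply/valuation_le/setIS/subsetP => x.
rewrite !inE ffunE => /eqP hx; apply/eqP/val_inj => /=.
by rewrite hx; apply/minn_idPl; rewrite -ltnS prednK.
Qed.

Lemma splits_into_pairs (I : finType) t (S : {set I}) (Q : I -> {set T}) g :
  pieces_disjoint S Q -> (2 * g <= #|S|)%N ->
  {in S &, forall i j, i != j -> t <= v (Q i :|: Q j)} ->
  splits_into t (\bigcup_(i in S) Q i) g.
Proof.
elim: g S => [|g IH] S Qdis S_ge pair_ge; first exact: splits_into0.
have /card_gt1P[a [b [aS bS ab]]] : (1 < #|S|)%N by lia.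
have bS' : b \in S :\ a by rewrite !inE eq_sym ab.
have cardS : #|S| = #|S :\ a :\ b|.+2 by rewrite (cardsD1 a S) (cardsD1 b (S :\ a)) aS bS'.
have sub_ab : S :\ a :\ b \subset S by apply: subset_trans (subsetDl _ _) (subsetDl _ _).
rewrite (big_setD1 a aS) (big_setD1 b bS') /= setUA.
apply: (splits_into_cons _ (pair_ge a b aS bS ab)).
  rewrite disjoints_subset subUset -!disjoints_subset.
  rewrite !(pieces_disjoint_bigcup Qdis) // ?subsetDl //.
  exact/setSD/subsetDl.
apply: IH; [exact: pieces_disjoint_sub Qdis | lia |].
by move=> i j /(subsetP sub_ab) iS /(subsetP sub_ab) jS; apply: pair_ge.
Qed.

End Valuation.

Section Deficit.
Context {R : realDomainType}.
Implicit Types u x y t : R.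

Definition deficit u x : R := Num.max 0 (u - x).

Lemma deficit_ge0 u x : 0 <= deficit u x.
Proof. by rewrite /deficit le_max lexx. Qed.

Lemma deficit_ge u x : u - x <= deficit u x.
Proof. by rewrite /deficit le_max lexx orbT. Qed.

Lemma deficit_le_sub u x : x <= u -> deficit u x = u - x.
Proof. by move=> le_xu; rewrite /deficit max_r // subr_ge0. Qed.

Lemma deficit_merge u t x y : t <= u -> x <= u -> y <= u -> x + y <= 2 * u - t ->
  deficit u (x + y) + t <= deficit u x + deficit u y.
Proof.
move=> le_tu le_xu le_yu le_xy.
rewrite (deficit_le_sub le_xu) (deficit_le_sub le_yu) -lerBrDr /deficit ge_max.
by apply/andP; split; lra.
Qed.

Lemma deficit_le u x y : 0 <= y -> u <= x + y -> deficit u x <= y.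
Proof. by move=> y_ge0 le_u; rewrite /deficit ge_max y_ge0 lerBlDl. Qed.

End Deficit.

Section Additive.
Context {R : realType} {T : finType} (v : {set T} -> R) (vP : valuation v).
Hypothesis vA : additive_valuation v.

Lemma additive_setU (A B : {set T}) : [disjoint A & B] -> v (A :|: B) = v A + v B.
Proof. by move=> dAB; rewrite !vA -bigU //; apply: eq_bigl => x; rewrite !inE. Qed.

Lemma additive_subadditive : subadditive_valuation v.
Proof.
move=> A B; have -> : A :|: B = A :|: (B :\: A).
  by apply/setP => x; rewrite !inE; case: (x \in A).
rewrite additive_setU; last by rewrite disjoint_sym disjoints_subset setDE subsetIr.
by rewrite lerD2l; apply/(valuation_le vP)/subsetDl.
Qed.

Lemma additive_sum_part n (f : {ffun T -> 'I_n}) (W : {set T}) :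
  \sum_j v (part f j :&: W) = v W.
Proof.
rewrite [v W]vA (partition_big f xpredT) //; apply: eq_bigr => j _.
by rewrite vA; apply: eq_bigl => x; rewrite !inE andbC.
Qed.

Lemma sum_deficit_setCI_part n (f : {ffun T -> 'I_n}) (W : {set T}) u :
  (forall j, u <= v (part f j)) -> \sum_j deficit u (v (~: W :&: part f j)) <= v W.
Proof.
move=> part_ge; rewrite -(additive_sum_part f W); apply: ler_sum => j _.
apply: deficit_le; first exact: valuation_ge0.
rewrite -additive_setU; last first.
  by rewrite -setI_eq0; apply/eqP/setP => x; rewrite !inE; case: (x \in W); rewrite ?andbF.
have -> : ~: W :&: part f j :|: part f j :&: W = part f j.
  by apply/setP => x; rewrite !inE; case: (x \in W); rewrite ?andbT ?andbF ?orbF.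
exact: part_ge.
Qed.

End Additive.

Section Bundling.
Context {R : realType} {T I : finType} (v : {set T} -> R).
Hypotheses (vP : valuation v) (vA : additive_valuation v).
Variables (t u : R) (N : nat).
Hypotheses (t_ge0 : 0 <= t) (le_tu : t <= u).
Hypothesis pairing_room : forall m g : nat, (m <= N)%N -> (m < 2 * g)%N ->
  (m%:R - g%:R) * t <= m%:R * (u - t).
Implicit Types (S : {set I}) (Q : I -> {set T}) (g : nat).

Definition bundles_from_pieces (S : {set I}) (Q : I -> {set T}) (g : nat) : Prop :=
  (#|S| <= N)%N -> pieces_disjoint S Q ->
  \sum_(i in S) deficit u (v (Q i)) <= (#|S|%:R - g%:R) * t ->
  splits_into v t (\bigcup_(i in S) Q i) g.

Lemma bundles_no_pieces S Q g : #|S| = 0%N -> bundles_from_pieces S Q g.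
Proof.
move=> /cards0_eq -> _ _; rewrite cards0 mulr0n.
case: g => [|g] Qdef; first exact: splits_into0.
rewrite big_set0 in Qdef.
by apply: (splits_into_le0 vP); have := ltr0Sn R g; nra.
Qed.

Lemma bundles_pairs S Q g : (0 < #|S|)%N -> {in S, forall i, v (Q i) < t} ->
  {in S &, forall a b, a != b -> 2 * u - t < v (Q a) + v (Q b)} ->
  bundles_from_pieces S Q g.
Proof.
move=> /card_gt0P[i0 i0S] small big_pairs SN Qdis Qdef.
apply: (splits_into_pairs vP Qdis); last first.
  move=> a b aS bS ab; rewrite (additive_setU vA (Qdis a b aS bS ab)).
  by have := big_pairs a b aS bS ab; have := le_tu; lra.
rewrite leqNgt; apply/negP => /(pairing_room SN).
have : #|S|%:R * (u - t) < \sum_(i in S) deficit u (v (Q i)).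
  rewrite mulr_natl -sumr_const; apply: ltr_sum => [|i iS].
    by apply/hasP; exists i0; rewrite ?mem_index_enum.
  by apply: lt_le_trans (deficit_ge _ _); rewrite ltrD2l ltrN2 small.
lra.
Qed.

Section Step.
Variables (S : {set I}) (Q : I -> {set T}) (g : nat).
Hypothesis IH : forall S' Q' g', (#|S'| < #|S|)%N -> bundles_from_pieces S' Q' g'.

Lemma bundles_big_piece i : i \in S -> t <= v (Q i) -> bundles_from_pieces S Q g.
Proof.
move=> iS le_tQ SN Qdis Qdef; case: g Qdef => [|g'] Qdef; first exact: splits_into0.
have cardS : #|S| = #|S :\ i|.+1 by rewrite (cardsD1 i S) iS.
rewrite (big_setD1 i iS) /=; apply: (splits_into_cons vP _ le_tQ).
  exact: pieces_disjoint_bigcup Qdis _ iS.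
apply: IH; [by rewrite cardS | lia | exact/(pieces_disjoint_sub _ Qdis)/subsetDl |].
move: Qdef; rewrite (big_setD1 i iS) cardS -!natr1 /=.
by have := deficit_ge0 u (v (Q i)); lra.
Qed.

Lemma bundles_merge a b : a \in S -> b \in S -> a != b ->
  v (Q a) < t -> v (Q b) < t -> v (Q a) + v (Q b) <= 2 * u - t ->
  bundles_from_pieces S Q g.
Proof.
move=> aS bS ab lt_a lt_b le_ab SN Qdis Qdef.
pose Q' i := if i == a then Q a :|: Q b else Q i.
have aS' : a \in S :\ b by rewrite !inE ab aS.
have cardS : #|S| = #|S :\ b|.+1 by rewrite (cardsD1 b S) bS.
have Q'E i : i \in S :\ b :\ a -> Q' i = Q i by rewrite /Q' !inE => /andP[/negbTE ->].
have Q'_bigcup : \bigcup_(i in S :\ b) Q' i = \bigcup_(i in S) Q i.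
  rewrite (big_setD1 a aS') (big_setD1 b bS) (big_setD1 a aS') /= /Q' eqxx setUCA -setUA.
  by congr (_ :|: (_ :|: _)); apply: eq_bigr => i /Q'E.
rewrite -Q'_bigcup; apply: IH; [by rewrite cardS | lia | |].
  exact: pieces_disjoint_merge.
have := deficit_merge le_tu (le_trans (ltW lt_a) le_tu) (le_trans (ltW lt_b) le_tu) le_ab.
move: Qdef; rewrite (big_setD1 b bS) (big_setD1 a aS') (big_setD1 a aS') /=.
rewrite [in X in _ -> _ -> X](eq_bigr (fun i => deficit u (v (Q i)))); last by move=> i /Q'E ->.
rewrite /Q' eqxx (additive_setU vA (Qdis a b aS bS ab)) cardS -natr1.
lra.
Qed.

End Step.

Lemma bundles_from_piecesP S Q g : bundles_from_pieces S Q g.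
Proof.
have [m] := ubnP #|S|; elim: m S Q g => // m IHm S Q g lt_Sm.
have IH S' Q' g' : (#|S'| < #|S|)%N -> bundles_from_pieces S' Q' g'.
  by move=> lt_S'; apply: IHm; lia.
have [S0|S_gt0] := posnP #|S|; first exact: bundles_no_pieces.
case: (boolP [exists i in S, t <= v (Q i)]) => [/exists_inP[i iS le_tQ] | no_big].
  exact: bundles_big_piece le_tQ.
have small : {in S, forall i, v (Q i) < t}.
  by move=> i iS; rewrite ltNge; apply: contra no_big => le_tQ; apply/exists_inP; exists i.
case: (boolP [exists a in S, exists b in S, (a != b) && (v (Q a) + v (Q b) <= 2 * u - t)]).
  move=> /exists_inP[a aS /exists_inP[b bS /andP[ab le_ab]]].
  exact: bundles_merge ab (small a aS) (small b bS) le_ab.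
move=> no_merge; apply: bundles_pairs => // a b aS bS ab.
rewrite ltNge; apply: contra no_merge => le_ab.
by apply/exists_inP; exists a => //; apply/exists_inP; exists b; rewrite ?ab.
Qed.

End Bundling.

Section Residual.
Context {R : realType} {T : finType} (v : {set T} -> R) (vP : valuation v).

Lemma subadditive_bigcup_le k (B : 'I_k -> {set T}) t :
  subadditive_valuation v -> (forall j, v (B j) <= t) ->
  v (\bigcup_(i < k) B i) <= k%:R * t.
Proof.
move=> vsub le_Bt; apply: le_trans (subadditive_bigcup vP _ vsub) _.
by apply: le_trans (ler_sum _ (fun i _ => le_Bt i)) _; rewrite sumr_const card_ord mulr_natl.
Qed.

Lemma rmms_prop_subadditive n : (0 < n)%N -> subadditive_valuation v ->
  rmms_prop v n (n%:R^-1 * MMS v n).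
Proof.
move=> n_gt0 vsub k lt_kn B _ lt_B; rewrite set_in_id.
have [MMS_ge0 [f f_ge]] := MMS_partition vP n_gt0.
set t := n%:R^-1 * MMS v n; set W := \bigcup_(i < k) B i.
have n_pos : (0 : R) < n%:R by rewrite ltr0n.
have tn : t * n%:R = MMS v n by rewrite /t mulrAC mulVf ?mul1r // gt_eqF.
have t_ge0 : 0 <= t by rewrite mulr_ge0 // invr_ge0 ltW.
have kt : k%:R * t + t <= MMS v n.
  have : (k%:R + 1 : R) <= n%:R by rewrite natr1 ler_nat.
  by rewrite -tn; nra.
have W_le : v W <= k%:R * t by apply: subadditive_bigcup_le => // j; apply: ltW.
apply: (splits_into_partition vP); first by rewrite subn_gt0.
exists (fun x => nat_of_ord (f x)) => j lt_j.
have lt_jn : (j < n)%N by lia.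
have -> : [set x | nat_of_ord (f x) == j] = part f (Ordinal lt_jn).
  by apply/setP => x; rewrite !inE.
have : v (part f (Ordinal lt_jn)) <= v (~: W :&: part f (Ordinal lt_jn)) + v W.
  apply: le_trans (vsub _ _); apply/valuation_le/subsetP => // x xf.
  by move: xf; rewrite !inE => ->; rewrite andbT orNb.
by have := f_ge (Ordinal lt_jn); lra.
Qed.

Lemma rmms_prop_additive n t : additive_valuation v -> (0 < n)%N ->
  0 <= t -> t <= MMS v n ->
  (forall m g : nat, (m <= n)%N -> (m < 2 * g)%N ->
     (m%:R - g%:R) * t <= m%:R * (MMS v n - t)) ->
  rmms_prop v n t.
Proof.
move=> vA n_gt0 t_ge0 le_tM room k lt_kn B _ lt_B; rewrite set_in_id.
have [_ [f f_ge]] := MMS_partition vP n_gt0.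
set W := \bigcup_(i < k) B i; pose Q j := ~: W :&: part f j.
have W_le : v W <= k%:R * t.
  by apply: subadditive_bigcup_le (additive_subadditive vP vA) _ => j; apply: ltW.
apply: (splits_into_partition vP); first by rewrite subn_gt0.
apply: (splits_intoS vP (U := \bigcup_(j in [set: 'I_n]) Q j)).
  by apply/bigcupsP => j _; apply: subsetIl.
have cardT : #|[set: 'I_n]| = n by rewrite cardsT card_ord.
apply: (bundles_from_piecesP vP vA t_ge0 le_tM room); rewrite ?cardT //.
  exact: pieces_disjoint_part.
rewrite natrB ?(ltnW lt_kn) // opprB addrC subrK (eq_bigl _ _ (fun j => in_setT j)).
exact: le_trans (sum_deficit_setCI_part vP vA W f_ge) W_le.
Qed.

End Residual.

Section Rho.
Context {R : realType} (n : nat) (n_ge1 : (1 <= n)%N).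

Lemma rho_nat_ratio : exists a b : nat,
  [/\ (0 < b)%N, @rho R n = a%:R / b%:R, (a <= b)%N, (2 * b <= 3 * a)%N &
      forall m g : nat, (m <= n)%N -> (m < 2 * g)%N -> (2 * m * a <= m * b + g * a)%N].
Proof.
rewrite /rho; case: ifP => n_odd.
  by exists (2 * n)%N, (3 * n - 1)%N; split=> // [|||m g]; nia.
have [q n2q] : exists q, n = (2 * q)%N.
  by exists n./2; rewrite -[n in LHS]odd_double_half n_odd add0n -muln2 mulnC.
exists (2 * n - 2)%N, (3 * n - 4)%N; split=> // [|||m g le_mn lt_m2g]; try lia.
(* When 2 g = m + 1, m is odd and n even, so m < n. *)
have [le_m2g | eq_m2g] : (m + 2 <= 2 * g)%N \/ (2 * g = m + 1)%N by lia.
  by nia.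
by nia.
Qed.

Lemma rho_le1 : @rho R n <= 1.
Proof.
have [a [b [b_gt0 -> le_ab _ _]]] := rho_nat_ratio.
by rewrite ler_pdivrMr ?ltr0n // mul1r ler_nat.
Qed.

Lemma two_thirds_le_rho : 2 / 3 <= @rho R n.
Proof.
have [a [b [b_gt0 -> _ le_ba _]]] := rho_nat_ratio.
rewrite ler_pdivlMr ?ltr0n // mulrAC ler_pdivrMr ?ltr0n //.
by have := le_ba; rewrite -(ler_nat R) !natrM => h; lra.
Qed.

Lemma rho_pairing m g : (m <= n)%N -> (m < 2 * g)%N ->
  (2 * m%:R - g%:R) * @rho R n <= m%:R.
Proof.
move=> le_mn lt_m2g; have [a [b [b_gt0 -> _ _ room]]] := rho_nat_ratio.
rewrite mulrA ler_pdivrMr ?ltr0n //.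
by have := room m g le_mn lt_m2g; rewrite -(ler_nat R) natrD !natrM => h; nra.
Qed.

End Rho.

Theorem mainTheorem4 (R : realType) (T : finType) (n : nat) (v : {set T} -> R) :
  (1 <= n)%N -> valuation v ->
  (subadditive_valuation v -> RMMS v n >= n%:R^-1 * MMS v n) /\
  (additive_valuation v ->
     RMMS v n >= @rho R n * MMS v n /\ RMMS v n >= 2 / 3 * MMS v n).
Proof.
move=> n_ge1 vP; have [MMS_ge0 _] := MMS_partition vP n_ge1.
split=> [vsub | vA].
  exact/(rmms_prop_le_RMMS vP n_ge1)/rmms_prop_subadditive.
have rho_ge0 : 0 <= @rho R n by apply: le_trans (two_thirds_le_rho n_ge1); lra.
have rho_RMMS : rho n * MMS v n <= RMMS v n.
  apply/(rmms_prop_le_RMMS vP n_ge1)/rmms_prop_additive => //.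
  - exact: mulr_ge0.
  - by rewrite ler_piMl // rho_le1.
  - move=> m g le_mn lt_m2g; have := rho_pairing (R := R) n_ge1 le_mn lt_m2g.
    by rewrite -subr_ge0 => /(mulr_ge0 MMS_ge0); nra.
split=> //; apply: le_trans rho_RMMS.
by rewrite ler_wpM2r // two_thirds_le_rho.
Qed.
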